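(* For $n\ge 2$ let $G_n$ be the intersection graph of the $\binom{n}{2}$ closed intervals $[i,j]$, $1\le i<j\le n$ (two intervals adjacent iff they intersect). If $G_n$ is the union of $t$ comparability subgraphs $H_1,\dots,H_t$ (i.e. $E(G_n)=\bigcup_{i=1}^t E(H_i)$), then $t\ge \frac12\log\log n$, where logarithms are base $2$.
   Context: A comparability graph is a graph admitting a transitive orientation (equivalently, the comparability graph of a partial order). *)

From mathcomp Require Import all_boot.
From Stdlib Require Import Reals.

Set Implicit Arguments.
Unset Strict Implicit.
Unset Printing Implicit Defensive.

(* Vertices of G_n: pairs (i, j) of points of {0, ..., n-1} with i < j,
   standing for the closed interval [i+1, j+1] (0-based shift of [1..n]). *)
Definition ivl (n : nat) := {p : 'I_n * 'I_n | p.1 < p.2}.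

Definition intersect n (u v : ivl n) : bool :=
  ((val u).1 <= (val v).2) && ((val v).1 <= (val u).2).

Definition Gn n : rel (ivl n) := fun u v => (u != v) && intersect u v.

Definition simple_graph (T : finType) (e : rel T) : Prop :=
  (forall x y, e x y = e y x) /\ (forall x, ~~ e x x).

Definition transitive_orientation (T : finType) (e : rel T) (o : rel T) : Prop :=
  [/\ (forall x y, o x y -> e x y),
      (forall x y, e x y -> o x y || o y x),
      (forall x y, ~~ (o x y && o y x)) &
      (forall x y z, o x y -> o y z -> o x z)].

Definition comparability_graph (T : finType) (e : rel T) : Prop :=
  simple_graph e /\ exists o, transitive_orientation e o.

Definition log2 (x : R) : R := (ln x / ln 2)%R.

From mathcomp Require Import all_boot.
From Stdlib Require Import Reals Lra.

Set Implicit Arguments.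
Unset Strict Implicit.
Unset Printing Implicit Defensive.

(* For a < b < c the intervals [a,b] and [b,c] meet, while [a,b] and [c,d] are
   disjoint when b < c.  Color the triple a < b < c by a pair (i, s): an index
   i with [a,b][b,c] in H_i, and the direction s of this edge in a transitive
   orientation of H_i.  Since a transitive orientation orients no induced path
   u - v - w as u -> v -> w or w -> v -> u, the consecutive triples (a,b,c) and
   (b,c,d) never share a color.  Such a coloring of the triples with 2t
   colors forces n <= 2^2^(2t): the map sending a to the family of the sets
   S_ab = {colors of the triples (a,b,c)}, for b > a, is injective. *)

Lemma card_set_type (T : finType) : #|{set T}| = expn 2 #|T|.
Proof.
rewrite -cardsT -card_powerset; apply: eq_card => A.
by rewrite powersetE subsetT inE.
Qed.

Section ShiftGraphColoring.

Variables (C : finType) (n : nat) (col : 'I_n -> 'I_n -> 'I_n -> pred C).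

Hypothesis col_total : forall a b c : 'I_n, a < b -> b < c -> exists x, col a b c x.
Hypothesis col_proper : forall (a b c d : 'I_n) x,
  a < b -> b < c -> c < d -> col a b c x -> ~~ col b c d x.

Let succ_colors (a b : 'I_n) : {set C} :=
  [set x | [exists c : 'I_n, (b < c) && col a b c x]].

Let color_family (a : 'I_n) : {set {set C}} :=
  [set succ_colors a b | b in [pred b : 'I_n | a < b]].

Lemma color_family_lt_neq (a b : 'I_n) : a < b -> color_family a != color_family b.
Proof.
move=> ab; apply/negP => /eqP Efam.
have : succ_colors a b \in color_family b by rewrite -Efam; apply/imsetP; exists b.
case/imsetP => c bc Esucc; rewrite inE /= in bc.
have [x abcx] := col_total ab bc.
have : x \in succ_colors a b by rewrite inE; apply/existsP; exists c; rewrite bc abcx.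
rewrite Esucc inE => /existsP [d /andP [cd bcdx]].
by move: (col_proper ab bc cd abcx); rewrite bcdx.
Qed.

Lemma shift_coloring_bound : n <= expn 2 (expn 2 #|C|).
Proof.
have inj_family : injective color_family.
  move=> a b Efam; case: (ltngtP a b) => [ab|ba|/val_inj //].
  - by move: (color_family_lt_neq ab); rewrite Efam eqxx.
  - by move: (color_family_lt_neq ba); rewrite Efam eqxx.
by have := leq_card color_family inj_family; rewrite card_ord !card_set_type.
Qed.

End ShiftGraphColoring.

Lemma transitive_orientation_induced_path (T : finType) (e o : rel T) (u v w : T) :
  transitive_orientation e o -> e u v -> e v w -> ~~ e u w -> ~~ e w u ->
  o u v != o v w.
Proof.
case=> o_sub o_tot _ o_trans euv evw nuw nwu; apply/negP => /eqP Eo.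
case ouv: (o u v) Eo => /esym ovw.
- by move: nuw; rewrite (o_sub _ _ (o_trans _ _ _ ouv ovw)).
- have ovu : o v u by move: (o_tot _ _ euv); rewrite ouv.
  have owv : o w v by move: (o_tot _ _ evw); rewrite ovw.
  by move: nwu; rewrite (o_sub _ _ (o_trans _ _ _ owv ovu)).
Qed.

Lemma Gn_sym n (u v : ivl n) : Gn u v = Gn v u.
Proof. by rewrite /Gn /intersect eq_sym; congr (_ && _); rewrite andbC. Qed.

Lemma Gn_consecutive n (u v : ivl n) : (val u).2 = (val v).1 -> Gn u v.
Proof.
case: u v => [[a b] ab] [[b' c] bc] /= Eb; subst b'.
rewrite /Gn /intersect /= (ltnW (ltn_trans ab bc)) leqnn !andbT.
apply/eqP => /(congr1 (fun w : ivl n => (val w).1)) /= Ea.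
by move: ab; rewrite Ea ltnn.
Qed.

Lemma Gn_separated n (u v : ivl n) : (val u).2 < (val v).1 -> ~~ Gn u v.
Proof.
case: u v => [[a b] ab] [[c d] cd] /= bc.
by rewrite /Gn /intersect /= (leqNgt c b) bc !andbF.
Qed.

Lemma Gn_subgraph_orientation_flips n (e o : rel (ivl n)) (u v w : ivl n) :
  transitive_orientation e o -> (forall x y, e x y -> Gn x y) ->
  e u v -> e v w -> (val u).2 < (val w).1 -> o u v != o v w.
Proof.
move=> o_trans e_sub euv evw uw.
apply: transitive_orientation_induced_path o_trans euv evw _ _.
- exact: contraNN (e_sub u w) (Gn_separated uw).
- by apply: contraNN (e_sub w u) _; rewrite Gn_sym; apply: Gn_separated.
Qed.

Section Log2.

Local Open Scope R_scope.

Lemma ln2_gt0 : 0 < ln 2.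
Proof. have := ln_lt_2; lra. Qed.

Lemma log2_le (x y : R) : 0 < x -> x <= y -> log2 x <= log2 y.
Proof.
move=> x_gt0 [xy|<-]; last exact: Rle_refl.
apply: Rmult_le_compat_r; first exact/Rlt_le/Rinv_0_lt_compat/ln2_gt0.
exact/Rlt_le/ln_increasing.
Qed.

Lemma log2_pow2 (k : nat) : log2 (2 ^ k) = INR k.
Proof. by rewrite /log2 ln_pow; [field; have := ln2_gt0; lra | lra]. Qed.

Lemma INR_expn2 (k : nat) : INR (expn 2 k) = 2 ^ k.
Proof. by elim: k => [|k IHk] //; rewrite expnS mult_INR IHk. Qed.

Lemma log2_log2_le (n N : nat) :
  (2 <= n)%nat -> (n <= expn 2 (expn 2 N))%nat -> log2 (log2 (INR n)) <= INR N.
Proof.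
move=> n_ge2 n_le.
have n_ge2R : 2 <= INR n by have := le_INR 2 n (elimT leP n_ge2); rewrite /=; lra.
have log2n_ge1 : 1 <= log2 (INR n).
  have <- : log2 2 = 1 by rewrite /log2; field; have := ln2_gt0; lra.
  by apply: log2_le; lra.
have : log2 (INR n) <= 2 ^ N.
  rewrite -INR_expn2 -(log2_pow2 (expn 2 N)) -INR_expn2.
  by apply: log2_le; [lra | exact/le_INR/leP].
by move=> /log2_le -/(_ ltac:(lra)); rewrite log2_pow2.
Qed.

End Log2.

Theorem theorem7 (n t : nat) (H : 'I_t -> rel (ivl n)) :
  2 <= n ->
  (forall i, comparability_graph (H i)) ->
  (forall i u v, H i u v -> Gn u v) ->
  (forall u v, Gn u v -> exists i, H i u v) ->
  (/ 2 * log2 (log2 (INR n)) <= INR t)%R.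
Proof.
move=> n_ge2 H_comp H_sub H_cover.
have [O O_trans] : exists O : 'I_t -> rel (ivl n),
    forall i, transitive_orientation (H i) (O i).
  apply: (@fin_all_exists _ (fun=> rel (ivl n)) (fun i => transitive_orientation (H i))).
  by move=> i; case: (H_comp i).
pose col (a b c : 'I_n) (x : 'I_t * bool) := [exists u : ivl n, exists v : ivl n,
  [&& val u == (a, b), val v == (b, c), H x.1 u v & O x.1 u v == x.2]].
have col_total (a b c : 'I_n) : a < b -> b < c -> exists x, col a b c x.
  move=> ab bc; pose u : ivl n := exist _ (a, b) ab; pose v : ivl n := exist _ (b, c) bc.
  have [i Hiuv] := H_cover u v (Gn_consecutive (erefl : (val u).2 = (val v).1)).
  by exists (i, O i u v); apply/existsP; exists u; apply/existsP; exists v; rewrite !eqxx Hiuv.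
have col_proper (a b c d : 'I_n) x : a < b -> b < c -> c < d -> col a b c x -> ~~ col b c d x.
  move=> _ bc _ /existsP [u /existsP [v /and4P [/eqP Eu /eqP Ev Huv /eqP Ouv]]].
  apply/negP => /existsP [v' /existsP [w /and4P [/eqP Ev' /eqP Ew Hvw /eqP Ovw]]].
  have Evv : v' = v by apply: val_inj; rewrite Ev Ev'.
  subst v'; have uw : (val u).2 < (val w).1 by rewrite Eu Ew.
  move: (Gn_subgraph_orientation_flips (O_trans x.1) (H_sub x.1) Huv Hvw uw).
  by rewrite Ouv Ovw eqxx.
have := shift_coloring_bound col_total col_proper.
rewrite card_prod card_ord card_bool => /(log2_log2_le n_ge2).
rewrite mult_INR /=; lra.
Qed.
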